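(* Let $\mathcal{H}$ be an infinite-dimensional separable Hilbert space with orthonormal bases $\{e_n\}$ and $\{f_n\}$, $\mathcal{D}_e=\mathrm{span}\{e_n\}$, $\mathcal{D}_f=\mathrm{span}\{f_n\}$, $\mathcal{D}_e^2=\mathrm{span}\{|e_k\rangle\langle e_\ell|\}$. Let $\mathcal{Q}$ be a linear map from $\mathcal{D}_e^2$ into sesquilinear forms on $\mathcal{D}_f$ which is completely positive, i.e. $\sum_{k,\ell=1}^N\langle\psi_k|\mathcal{Q}(|\phi_k\rangle\langle\phi_\ell|)|\psi_\ell\rangle\ge0$ for all $N$, $\phi_1,\dots,\phi_N\in\mathcal{D}_e$, $\psi_1,\dots,\psi_N\in\mathcal{D}_f$. Then there exists a countable family of generalized operators $K_\alpha$ (linear maps from $\mathcal{D}_e$ into the conjugate algebraic dual of $\mathcal{D}_f$) such that $\mathcal{Q}(\rho)=\sum_\alpha K_\alpha\rho K_\alpha^\dagger$ for all $\rho\in\mathcal{D}_e^2$, i.e. for all $\phi,\phi'\in\mathcal{D}_e$ and $g,f\in\mathcal{D}_f$, $$\langle g|\mathcal{Q}(|\phi\rangle\langle\phi'|)|f\rangle=\sum_\alpha\langle g|K_\alpha|\phi\rangle\,\langle f|K_\alpha|\phi'\rangle^*.$$ If moreover for each $\rho\in\mathcal{D}_e^2$ there is a bounded operator $\breve{\mathcal{Q}}(\rho)\in\mathcal{B}(\mathcal{H})$ with $\langle g|\mathcal{Q}(\rho)|f\rangle=\langle g|\breve{\mathcal{Q}}(\rho)f\rangle$ for all $f,g\in\mathcal{D}_f$,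 then each $K_\alpha$ is an operator mapping $\mathcal{D}_e$ into $\mathcal{H}$.
   Context: A generalized operator $K$ is a linear map from $\mathcal{D}_e$ into the conjugate algebraic dual of $\mathcal{D}_f$; we write $\langle f|K|e\rangle$ for the value of the functional $Ke$ at $f\in\mathcal{D}_f$. Its adjoint $K^\dagger$ maps $\mathcal{D}_f$ into the conjugate algebraic dual of $\mathcal{D}_e$ via $\langle e|K^\dagger|f\rangle=\langle f|K|e\rangle^*$. ''$K$ maps $\mathcal{D}_e$ into $\mathcal{H}$'' means each functional $Ke$ is of the form $f\mapsto\langle f|v\rangle$ for some $v\in\mathcal{H}$. *)

From mathcomp Require Import all_boot all_algebra.
From mathcomp Require Import reals complex.
Set Implicit Arguments. Unset Strict Implicit. Unset Printing Implicit Defensive.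
Import GRing.Theory Num.Theory.
Local Open Scope ring_scope.

Section HilbertDefs.
Variable R : realType.
Local Notation C := R[i].
Variable V : lmodType C.
(* Physicists' convention: ip x y = <x|y>, antilinear in x, linear in y. *)
Variable ip : V -> V -> C.

Definition inner_product : Prop :=
  [/\ (forall (a : C) (x y z : V), ip x (a *: y + z) = a * ip x y + ip x z),
      (forall x y : V, ip y x = (ip x y)^*),
      (forall x : V, 0 <= ip x x) &
      (forall x : V, ip x x = 0 -> x = 0)].

Definition normsq (x : V) : C := ip x x.

(* Completeness w.r.t. the norm induced by ip (0 < eps in C forces eps real) *)
Definition ip_complete : Prop :=
  forall u : nat -> V,
    (forall eps : C, 0 < eps -> exists N : nat,
        forall m n : nat, (N <= m)%N -> (N <= n)%N -> normsq (u m - u n) < eps) ->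
    exists l : V, forall eps : C, 0 < eps -> exists N : nat,
        forall n : nat, (N <= n)%N -> normsq (u n - l) < eps.

Definition hilbert_space : Prop := inner_product /\ ip_complete.

Definition orthonormal_basis (e : nat -> V) : Prop :=
  (forall i j : nat, ip (e i) (e j) = (i == j)%:R) /\
  (forall v : V, (forall n : nat, ip (e n) v = 0) -> v = 0).

Definition in_span (e : nat -> V) (v : V) : Prop :=
  exists (n : nat) (c : 'I_n -> C) (k : 'I_n -> nat),
    v = \sum_(i < n) c i *: e (k i).

Definition ketbra (phi phi' : V) : V -> V := fun v => ip phi' v *: phi.

Definition in_span2 (e : nat -> V) (rho : V -> V) : Prop :=
  exists (n : nat) (c : 'I_n -> C) (k l : 'I_n -> nat),
    rho = fun v => \sum_(i < n) c i *: ketbra (e (k i)) (e (l i)) v.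

Definition bounded_operator (T : V -> V) : Prop :=
  (forall (a : C) (x y : V), T (a *: x + y) = a *: T x + T y) /\
  (exists M : C, forall x : V, normsq (T x) <= M * normsq x).

(* Q : rho |-> sesquilinear form on D_f; Q rho g f stands for <g|Q(rho)|f>.
   Q is linear on D_e^2 and each Q rho is sesquilinear on D_f. *)
Definition Q_linear_sesq (e f : nat -> V) (Q : (V -> V) -> V -> V -> C) : Prop :=
  (forall (a : C) (rho sig : V -> V), in_span2 e rho -> in_span2 e sig ->
     forall g h : V, in_span f g -> in_span f h ->
       Q (fun v => a *: rho v + sig v) g h = a * Q rho g h + Q sig g h) /\
  (forall rho : V -> V, in_span2 e rho ->
     (forall (a : C) (g h h' : V), in_span f g -> in_span f h -> in_span f h' ->
        Q rho g (a *: h + h') = a * Q rho g h + Q rho g h') /\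
     (forall (a : C) (g g' h : V), in_span f g -> in_span f g' -> in_span f h ->
        Q rho (a *: g + g') h = a^* * Q rho g h + Q rho g' h)).

Definition completely_positive (e f : nat -> V) (Q : (V -> V) -> V -> V -> C) : Prop :=
  forall (N : nat) (phi psi : 'I_N -> V),
    (forall i, in_span e (phi i)) -> (forall i, in_span f (psi i)) ->
    0 <= \sum_(k < N) \sum_(l < N) Q (ketbra (phi k) (phi l)) (psi k) (psi l).

(* Generalized operator K : D_e -> (D_f)^x (conjugate algebraic dual);
   K phi h stands for <h|K|phi>: linear in phi in D_e, antilinear in h in D_f. *)
Definition generalized_operator (e f : nat -> V) (K : V -> V -> C) : Prop :=
  (forall (a : C) (phi phi' h : V), in_span e phi -> in_span e phi' -> in_span f h ->
     K (a *: phi + phi') h = a * K phi h + K phi' h) /\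
  (forall (a : C) (phi h h' : V), in_span e phi -> in_span f h -> in_span f h' ->
     K phi (a *: h + h') = a^* * K phi h + K phi h').

(* K maps D_e into H: each functional K phi is h |-> <h|v> for some v in H *)
Definition maps_into_H (e f : nat -> V) (K : V -> V -> C) : Prop :=
  forall phi : V, in_span e phi ->
    exists v : V, forall h : V, in_span f h -> K phi h = ip h v.

End HilbertDefs.

(* Unordered (= absolutely convergent) sum over the countable index set nat:
   the family is absolutely summable and its series converges to l. *)
Definition sums_to (R : realType) (u : nat -> R[i]) (l : R[i]) : Prop :=
  (exists M : R[i], forall n : nat, \sum_(i < n) `|u i| <= M) /\
  (forall eps : R[i], 0 < eps -> exists N : nat,
     forall n : nat, (N <= n)%N -> `|\sum_(i < n) u i - l| < eps).

From mathcomp Require Import all_boot all_algebra.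
From mathcomp Require Import reals complex.
From mathcomp Require Import ring lra zify.
From mathcomp Require Import boolp classical_sets.
Import order.Order.TTheory GRing.Theory Num.Theory.
Local Open Scope ring_scope.
Set Implicit Arguments. Unset Strict Implicit. Unset Printing Implicit Defensive.

(* Write A((k, m), (l, j)) = <f_m|Q(|e_k><e_l|)|f_j>.  Complete positivity says
   exactly that A is a positive semidefinite kernel on the countable set N x N.
   Enumerating N x N and taking successive Schur complements (an infinite Cholesky
   decomposition) gives A(x, y) = \sum_a v_a(x) v_a(y)^*, where v_a vanishes on the
   first a indices, so on any finite block of indices only finitely many a contribute.
   The Kraus operators are <f_m|K_a|e_k> = v_a(k, m), extended sesquilinearly.
   If Q(|phi><phi|) is a bounded operator T with ||T x||^2 <= M ||x||^2, then with
   c_m = <f_m|K_a|phi> and v = \sum_(m < n) c_m f_m the a-th Kraus term gives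
   S^2 <= <v|T v> <= (1 + M) S / 2 for S = \sum_(m < n) |c_m|^2, so the partial sums
   S stay bounded and the Riesz-Fischer theorem yields the vector K_a phi. *)

Section PsdKernel.
Variable C : numClosedFieldType.

Definition psd_kernel (A : nat -> nat -> C) := forall n (c : nat -> C) (x : nat -> nat),
  0 <= \sum_(i < n) \sum_(j < n) c i * (c j)^* * A (x i) (x j).

Lemma psd_kernel_ext A B : (forall x y, B x y = A x y) -> psd_kernel A -> psd_kernel B.
Proof.
move=> eqAB psdA n c x; have := psdA n c x.
by under eq_bigr do under eq_bigr do rewrite -eqAB.
Qed.

Section Psd.
Variable A : nat -> nat -> C.
Hypothesis psdA : psd_kernel A.

Lemma psd_kernel2 a b (s t : C) :
  0 <= s * s^* * A a a + s * t^* * A a b + t * s^* * A b a + t * t^* * A b b.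
Proof.
have := psdA 2 (fun i => if i == 0%N then s else t) (fun i => if i == 0%N then a else b).
by rewrite !big_ord_recr !big_ord0 /= !add0r !addrA.
Qed.

Lemma psd_kernel_diag_ge0 a : 0 <= A a a.
Proof.
have := psd_kernel2 a a 1 0.
by rewrite conjC1 conjC0 !mulr0 !mul0r !addr0 mulr1 mul1r.
Qed.

Lemma psd_kernel_herm a b : A b a = (A a b)^*.
Proof.
(* testing against (1, 1) and (1, 'i) shows that [A a b + A b a] and
   ['i (A b a - A a b)] are real *)
have [Ea Eb] := (geC0_conj (psd_kernel_diag_ge0 a), geC0_conj (psd_kernel_diag_ge0 b)).
have := geC0_conj (psd_kernel2 a b 1 1); have := geC0_conj (psd_kernel2 a b 1 'i).
rewrite !conjC1 !mul1r !mulr1 !rmorphD !rmorphM /= !conjCK conjCi Ea Eb.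
set z := A a b; set w := A b a => Hi H1.
have re_part : z^* + w^* - (z + w) = 0.
  by apply/eqP; rewrite subr_eq0; apply/eqP/(addrI (A a a))/(addIr (A b b)); rewrite !addrA.
have im_part : z^* - w^* - (w - z) = 0.
  suff /eqP : 'i * (z^* - w^* - (w - z)) = 0 by rewrite mulf_eq0 (negPf (neq0Ci C)) => /eqP.
  have -> : 'i * (z^* - w^* - (w - z)) = (A a a + 'i * z^* + - 'i * w^* + - 'i * 'i * A b b) -
    (A a a + - 'i * z + 'i * w + 'i * - 'i * A b b) by ring.
  by rewrite Hi subrr.
suff /eqP : (w - z^*) * 2%:R = 0 by rewrite mulf_eq0 pnatr_eq0 orbF subr_eq0 => /eqP.
have -> : (w - z^*) * 2%:R = - (z^* + w^* - (z + w)) - (z^* - w^* - (w - z)) by ring.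
by rewrite re_part im_part subr0 oppr0.
Qed.

Lemma psd_kernel_row_eq0 a b : A a a = 0 -> A a b = 0.
Proof.
move=> Aaa0; have Abb := psd_kernel_diag_ge0 b.
set z := A a b; set q := z * z^*.
have [/eqP|q_neq0] := eqVneq q 0; first by rewrite mul_conjC_eq0 => /eqP.
(* testing against [s = - r z^*, t = 1] with [2 r q = A b b + 1] gives [0 <= -1] *)
set r := (A b b + 1) / (2%:R * q).
have r_ge0 : 0 <= r by apply: divr_ge0; [exact: addr_ge0 | exact: mulr_ge0 (mul_conjC_ge0 z)].
have := psd_kernel2 a b (- r * z^*) 1.
rewrite Aaa0 (psd_kernel_herm a b) -/z mulr0 add0r conjC1 !mulr1 mul1r.
rewrite rmorphM rmorphN /= conjCK (geC0_conj r_ge0).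
have -> : - r * z^* * z + - r * z * z^* + 1 * A b b = A b b - r * (2%:R * q) by rewrite /q; ring.
rewrite /r mulfVK; last by rewrite mulf_eq0 negb_or q_neq0 pnatr_eq0.
by rewrite opprD addrA subrr add0r oppr_ge0 ler10.
Qed.

Lemma psd_kernel_schur j : A j j != 0 ->
  psd_kernel (fun x y => A x y - A x j * (A y j)^* / A j j).
Proof.
move=> p_neq0 n c x.
have p_real : (A j j)^* = A j j := geC0_conj (psd_kernel_diag_ge0 j).
set p := A j j in p_neq0 p_real *; set u := \sum_(i < n) c i * A (x i) j.
(* extend the test vector by the coefficient [- u / p] at the pivot [j] *)
have := psdA n.+1 (fun k => if (k < n)%N then c k else - u / p)
                  (fun k => if (k < n)%N then x k else j).
rewrite big_ord_recr /=; under eq_bigr => i _ do rewrite big_ord_recr /=.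
rewrite big_split /= ltnn big_ord_recr /= ltnn.
under eq_bigr => i _ do under eq_bigr => k _ do rewrite /= !ltn_ord.
under [X in _ + X + _]eq_bigr => i _ do rewrite /= ltn_ord.
under [X in _ + _ + (X + _)]eq_bigr => i _ do rewrite /= ltn_ord.
set S := \sum_(i < n) \sum_(k < n) _.
have -> : \sum_(i < n) c i * (- u / p)^* * A (x i) j = u * (- u / p)^*.
  by rewrite /u big_distrl /=; apply: eq_bigr => i _; ring.
have -> : \sum_(i < n) - u / p * (c i)^* * A j (x i) = - u / p * u^*.
  rewrite /u rmorph_sum big_distrr /=; apply: eq_bigr => i _.
  by rewrite (psd_kernel_herm (x i) j) rmorphM /=; ring.
rewrite rmorphM rmorphN fmorphV /= p_real => /le_trans; apply.
suff -> : \sum_(i < n) \sum_(k < n) c i * (c k)^* *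
    (A (x i) (x k) - A (x i) j * (A (x k) j)^* / p) = S - u * u^* / p.
  by rewrite le_eqVlt -/p; apply/orP; left; apply/eqP; field.
rewrite /S /u rmorph_sum /= !big_distrl /= -sumrB; apply: eq_bigr => i _.
rewrite big_distrr /= big_distrl /= -sumrB; apply: eq_bigr => k _.
by rewrite rmorphM /=; ring.
Qed.

End Psd.

Section Cholesky.
Variable A : nat -> nat -> C.
Hypothesis psdA : psd_kernel A.

Definition chol_col (r : nat -> nat -> C) (j x : nat) : C :=
  if r j j == 0 then 0 else r x j / sqrtC (r j j).

Fixpoint schur_residual (j : nat) : nat -> nat -> C :=
  if j is j'.+1 then fun x y =>
    schur_residual j' x y -
    chol_col (schur_residual j') j' x * (chol_col (schur_residual j') j' y)^*
  else A.

Definition chol_vec j x := chol_col (schur_residual j) j x.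

Lemma chol_col_outer r j x y : 0 <= r j j -> r j j != 0 ->
  chol_col r j x * (chol_col r j y)^* = r x j * (r y j)^* / r j j.
Proof.
move=> rjj_ge0 rjj_neq0; rewrite /chol_col (negPf rjj_neq0).
have sqrt_ge0 : 0 <= sqrtC (r j j) by rewrite sqrtC_ge0.
have sqrt_neq0 : sqrtC (r j j) != 0 by rewrite sqrtC_eq0.
rewrite rmorphM fmorphV /= (geC0_conj sqrt_ge0).
by rewrite -{3}(sqrtCK (r j j)) expr2; field.
Qed.

Lemma schur_residual_psd j : psd_kernel (schur_residual j).
Proof.
elim: j => [|j IH] //=; have [rjj0|rjj_neq0] := eqVneq (schur_residual j j j) 0.
  by apply: psd_kernel_ext IH => x y; rewrite /chol_col rjj0 eqxx; ring.
apply: psd_kernel_ext (psd_kernel_schur IH rjj_neq0) => x y.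
by rewrite chol_col_outer ?psd_kernel_diag_ge0.
Qed.

Lemma schur_residual_diag_eq0 j k : (j < k)%N -> schur_residual k j j = 0.
Proof.
elim: k => [//|k IH]; rewrite ltnS leq_eqVlt => /orP[/eqP ->|ltjk] /=.
- have [rkk0|rkk_neq0] := eqVneq (schur_residual k k k) 0.
    by rewrite /chol_col rkk0 eqxx; ring.
  rewrite chol_col_outer ?(psd_kernel_diag_ge0 (schur_residual_psd k)) //.
  by rewrite (geC0_conj (psd_kernel_diag_ge0 (schur_residual_psd k) k)) mulfK // subrr.
- (* the updated diagonal entry is [- |chol_col|^2], yet it is nonnegative *)
  have := psd_kernel_diag_ge0 (schur_residual_psd k.+1) j.
  rewrite /= (IH ltjk) add0r oppr_ge0 => sq_le0.
  by apply/eqP; rewrite oppr_eq0 eq_le sq_le0 mul_conjC_ge0.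
Qed.

Lemma chol_vec_eq0 a x : (x < a)%N -> chol_vec a x = 0.
Proof.
move=> ltxa; rewrite /chol_vec /chol_col; case: ifP => // _.
by rewrite (psd_kernel_row_eq0 (schur_residual_psd a) _ (schur_residual_diag_eq0 ltxa)) mul0r.
Qed.

Lemma schur_residual_decomp B x y :
  A x y = schur_residual B x y + \sum_(a < B) chol_vec a x * (chol_vec a y)^*.
Proof.
elim: B => [|B IH]; first by rewrite big_ord0 addr0.
by rewrite big_ord_recr /= IH /chol_vec; ring.
Qed.

Lemma cholesky_decomp B x y : (x < B)%N ->
  A x y = \sum_(a < B) chol_vec a x * (chol_vec a y)^*.
Proof.
move=> ltxB; rewrite (schur_residual_decomp B).
by rewrite (psd_kernel_row_eq0 (schur_residual_psd B) _ (schur_residual_diag_eq0 ltxB)) add0r.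
Qed.

End Cholesky.
End PsdKernel.

Lemma sum_mul_delta (C : pzSemiRingType) (F : nat -> C) (N j : nat) :
  \sum_(k < N) F k * (j == k :> nat)%:R = if (j < N)%N then F j else 0.
Proof.
elim: N => [|N IH]; first by rewrite big_ord0.
rewrite big_ord_recr /= IH ltnS.
by case: ltngtP => [||->]; rewrite ?mulr0 ?addr0 ?mulr1 ?add0r.
Qed.

Lemma sum_ord_tail0 (M : nmodType) (F : nat -> M) N N' : (N <= N')%N ->
  (forall k, (N <= k)%N -> F k = 0) -> \sum_(k < N') F k = \sum_(k < N) F k.
Proof.
move=> le_NN' F0; rewrite -!(big_mkord xpredT) (big_cat_nat (leq0n N) le_NN') /=.
rewrite -[RHS]addr0; congr (_ + _).
by rewrite big_nat_cond big1 // => k /andP[/andP[/F0]].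
Qed.

Lemma sum_ord_tail0_eq (M : nmodType) (F : nat -> M) N N' :
  (forall k, (N <= k)%N -> F k = 0) -> (forall k, (N' <= k)%N -> F k = 0) ->
  \sum_(k < N) F k = \sum_(k < N') F k.
Proof.
by move=> F0 F0'; rewrite -(sum_ord_tail0 (leq_maxl N N') F0) -(sum_ord_tail0 (leq_maxr N N') F0').
Qed.

Lemma sum_ord_ge0_mono (C : numDomainType) (F : nat -> C) n n' :
  (forall i, 0 <= F i) -> (n <= n')%N -> \sum_(i < n) F i <= \sum_(i < n') F i.
Proof.
move=> F_ge0 le_nn'; rewrite -!(big_mkord xpredT) (big_cat_nat (leq0n n) le_nn') /=.
by rewrite lerDl sumr_ge0.
Qed.

Lemma bounded_almost_max (R : realType) (S : nat -> R[i]) (D : R[i]) :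
  (forall n, 0 <= S n) -> (forall n, S n <= D) ->
  forall eps, 0 < eps -> exists N, forall n, S n - S N < eps.
Proof.
move=> S_ge0 S_le eps eps_gt0.
have S_real n : (complex.Re (S n))%:C%C = S n by rewrite RRe_real ?ger0_real.
have eps_real : (complex.Re eps)%:C%C = eps by rewrite RRe_real ?gtr0_real.
pose E : set R := fun r => exists n, r = complex.Re (S n).
have hasE : has_sup E.
  split; first by exists (complex.Re (S 0%N)), 0%N.
  exists (complex.Re D) => _ [n ->].
  by rewrite -lecR S_real RRe_real ?S_le ?ger0_real ?(le_trans (S_ge0 n) (S_le n)).
have Re_eps_gt0 : 0 < complex.Re eps by rewrite -ltcR eps_real.
have [_ [N ->] supE_lt] := sup_adherent Re_eps_gt0 hasE.
exists N => n; rewrite -S_real -(S_real N) -eps_real -rmorphB ltcR.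
have : complex.Re (S n) <= sup E by apply: sup_upper_bound => //; exists n.
lra.
Qed.

Lemma mul_double_sum_conj (C : numClosedFieldType) N (X Y : nat -> nat -> C) :
  (\sum_(k < N) \sum_(m < N) X k m) * (\sum_(l < N) \sum_(j < N) Y l j)^* =
  \sum_(k < N) \sum_(m < N) \sum_(l < N) \sum_(j < N) X k m * (Y l j)^*.
Proof.
rewrite big_distrl; apply: eq_bigr => k _; rewrite big_distrl; apply: eq_bigr => m _.
rewrite rmorph_sum big_distrr; apply: eq_bigr => l _.
by rewrite rmorph_sum big_distrr.
Qed.

Section InnerProduct.
Variable R : realType.
Local Notation C := R[i].
Variable V : lmodType C.
Variable ip : V -> V -> C.
Hypothesis hip : inner_product ip.

Lemma ipDZr a x y z : ip x (a *: y + z) = a * ip x y + ip x z.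
Proof. by case: hip. Qed.

Lemma ipC x y : ip y x = (ip x y)^*.
Proof. by case: hip. Qed.

Lemma ip_ge0 x : 0 <= ip x x.
Proof. by case: hip => _ _ + _; apply. Qed.

Lemma ip0r x : ip x 0 = 0.
Proof. by apply: (addIr (ip x 0)); rewrite add0r -{1}(mul1r (ip x 0)) -ipDZr scaler0 addr0. Qed.

Lemma ipDr x y z : ip x (y + z) = ip x y + ip x z.
Proof. by rewrite -{1}[y]scale1r ipDZr mul1r. Qed.

Lemma ipZr a x y : ip x (a *: y) = a * ip x y.
Proof. by rewrite -[a *: y]addr0 ipDZr ip0r addr0. Qed.

Lemma ipNr x y : ip x (- y) = - ip x y.
Proof. by rewrite -scaleN1r ipZr mulN1r. Qed.

Lemma ipBr x y z : ip x (y - z) = ip x y - ip x z.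
Proof. by rewrite ipDr ipNr. Qed.

Lemma ip0l x : ip 0 x = 0.
Proof. by rewrite ipC ip0r conjC0. Qed.

Lemma ipDl x y z : ip (y + z) x = ip y x + ip z x.
Proof. by rewrite ipC ipDr rmorphD /= -!ipC. Qed.

Lemma ipZl a x y : ip (a *: y) x = a^* * ip y x.
Proof. by rewrite ipC ipZr rmorphM /= -ipC. Qed.

Lemma ipNl x y : ip (- y) x = - ip y x.
Proof. by rewrite ipC ipNr rmorphN /= -ipC. Qed.

Lemma ipBl x y z : ip (y - z) x = ip y x - ip z x.
Proof. by rewrite ipDl ipNl. Qed.

Lemma ip_sumr I (r : seq I) (P : pred I) (F : I -> V) x :
  ip x (\sum_(i <- r | P i) F i) = \sum_(i <- r | P i) ip x (F i).
Proof. exact: (big_morph (ip x) (ipDr x) (ip0r x)). Qed.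

Lemma ip_suml I (r : seq I) (P : pred I) (F : I -> V) x :
  ip (\sum_(i <- r | P i) F i) x = \sum_(i <- r | P i) ip (F i) x.
Proof. exact: (big_morph (ip^~ x) (ipDl x) (ip0l x)). Qed.

Lemma normsqN x : normsq ip (- x) = normsq ip x.
Proof. by rewrite /normsq ipNl ipNr opprK. Qed.

Lemma bessel1 u x : ip u u = 1 -> ip u x * (ip u x)^* <= ip x x.
Proof.
move=> u_unit; have := ip_ge0 (x - ip u x *: u).
rewrite ipBl !ipBr !ipZl !ipZr u_unit (ipC u x) subr_ge0.
by rewrite mulr1 subrr subr_ge0.
Qed.

Lemma ip_le_normsq x y : 0 <= ip x y -> 2%:R * ip x y <= ip x x + ip y y.
Proof.
move=> xy_ge0; rewrite -subr_ge0.
have := ip_ge0 (x - y); rewrite ipBl !ipBr (ipC x y) (geC0_conj xy_ge0).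
by rewrite (_ : ip x x + ip y y - _ = ip x x - ip x y - (ip x y - ip y y)) //; ring.
Qed.

Definition coef_vanish (w : nat -> V) N v := forall k, (N <= k)%N -> ip (w k) v = 0.

Lemma coef_vanish_mono w N N' v : (N <= N')%N -> coef_vanish w N v -> coef_vanish w N' v.
Proof. by move=> le_NN' w0 k le_N'k; apply/w0/(leq_trans le_NN'). Qed.

Lemma coef_vanish_lincomb w N a x y :
  coef_vanish w N x -> coef_vanish w N y -> coef_vanish w N (a *: x + y).
Proof. by move=> x0 y0 k le_Nk; rewrite ipDZr x0 ?y0 // mulr0 addr0. Qed.

Definition support_bound (w : nat -> V) v : nat := xget 0%N (fun N => coef_vanish w N v).

Lemma coef_vanish_support_bound w N v : coef_vanish w N v -> coef_vanish w (support_bound w v) v.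
Proof. by move=> w0; have /(xgetPex 0%N) : exists N, coef_vanish w N v by exists N. Qed.

Section OrthonormalBasis.
Variable w : nat -> V.
Hypothesis hw : orthonormal_basis ip w.

Lemma ip_onb i j : ip (w i) (w j) = (i == j)%:R.
Proof. by case: hw. Qed.

Lemma ip_onb_sum N (a : nat -> C) j :
  ip (w j) (\sum_(k < N) a k *: w k) = if (j < N)%N then a j else 0.
Proof. by rewrite ip_sumr; under eq_bigr do rewrite ipZr ip_onb; apply: sum_mul_delta. Qed.

Lemma normsq_onb_sum N (a : nat -> C) :
  normsq ip (\sum_(k < N) a k *: w k) = \sum_(k < N) a k * (a k)^*.
Proof.
rewrite /normsq ip_suml; apply: eq_bigr => k _.
by rewrite ipZl ip_onb_sum ltn_ord mulrC.
Qed.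

Lemma span_coef_vanish v : in_span w v -> exists N, coef_vanish w N v.
Proof.
case=> n [c [k ->]]; exists (\max_(i < n) (k i).+1)%N => j le_maxj.
rewrite ip_sumr big1 // => i _; rewrite ipZr ip_onb.
case: eqP => [eq_jk|]; last by rewrite mulr0.
by have := leq_trans (leq_bigmax i) le_maxj; rewrite eq_jk ltnn.
Qed.

Lemma span_support_bound v : in_span w v -> coef_vanish w (support_bound w v) v.
Proof. by move=> /span_coef_vanish [N]; apply: coef_vanish_support_bound. Qed.

Lemma onb_expand N v : coef_vanish w N v -> v = \sum_(k < N) ip (w k) v *: w k.
Proof.
move=> v0; apply/eqP; rewrite -subr_eq0; apply/eqP.
apply: hw.2 => j; rewrite ipBr (ip_onb_sum N (fun k => ip (w k) v)).
by case: ltnP => [_|/v0 ->]; rewrite subrr.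
Qed.

Lemma span_onb_sum N (a : nat -> C) : in_span w (\sum_(k < N) a k *: w k).
Proof. by exists N, (fun i : 'I_N => a i), (fun i : 'I_N => val i). Qed.

Lemma span0 : in_span w 0.
Proof. by exists 0%N, (fun=> 0), (fun=> 0%N); rewrite big_ord0. Qed.

Lemma span_onbZ a k : in_span w (a *: w k).
Proof. by exists 1%N, (fun=> a), (fun=> k); rewrite big_ord1. Qed.

Lemma span_onb k : in_span w (w k).
Proof. by rewrite -[w k]scale1r; apply: span_onbZ. Qed.

Lemma linear_onb_sum (G : V -> C) :
  (forall a g g', in_span w g -> in_span w g' -> G (a *: g + g') = a * G g + G g') ->
  forall N (a : nat -> C), G (\sum_(k < N) a k *: w k) = \sum_(k < N) a k * G (w k).
Proof.
move=> G_lin; elim=> [|N IH] a.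
  rewrite !big_ord0; apply: (addIr (G 0)); rewrite add0r -{1}(mul1r (G 0)).
  by rewrite -G_lin ?scaler0 ?addr0 //; exact: span0.
by rewrite !big_ord_recr /= addrC G_lin ?IH 1?addrC //; [exact: span_onb | exact: span_onb_sum].
Qed.

Lemma antilinear_onb_sum (G : V -> C) :
  (forall a g g', in_span w g -> in_span w g' -> G (a *: g + g') = a^* * G g + G g') ->
  forall N (a : nat -> C), G (\sum_(k < N) a k *: w k) = \sum_(k < N) (a k)^* * G (w k).
Proof.
move=> G_antilin N a; rewrite -[LHS]conjCK.
rewrite (@linear_onb_sum (fun g => (G g)^*)) ?rmorph_sum /=.
  by apply: eq_bigr => k _; rewrite rmorphM /= conjCK.
by move=> b g g' wg wg'; rewrite G_antilin // rmorphD rmorphM /= conjCK.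
Qed.

Lemma normsq_onb_sumB (c : nat -> C) n m : (n <= m)%N ->
  normsq ip (\sum_(k < m) c k *: w k - \sum_(k < n) c k *: w k) =
  \sum_(k < m) c k * (c k)^* - \sum_(k < n) c k * (c k)^*.
Proof.
move=> le_nm; pose d k := if (k < n)%N then c k else 0.
have widen (M : nmodType) (G : C -> nat -> M) : (forall k, G 0 k = 0) ->
    \sum_(k < n) G (c k) k = \sum_(k < m) G (d k) k.
  move=> G0; rewrite (sum_ord_tail0 (F := fun k => G (d k) k) le_nm) => [|k].
    by apply: eq_bigr => k _; rewrite /d ltn_ord.
  by rewrite /d ltnNge => ->.
rewrite (widen _ (fun a k => a *: w k)) => [|k]; last by rewrite scale0r.
rewrite (widen _ (fun a _ => a * a^*)) => [|k]; last by rewrite mul0r.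
rewrite -!sumrB.
under eq_bigr do rewrite -scalerBl.
rewrite (normsq_onb_sum m (fun k => c k - d k)); apply: eq_bigr => k _.
by rewrite /d; case: ifP => _; rewrite ?subrr ?mul0r ?subr0.
Qed.

Lemma riesz_fischer (c : nat -> C) (D : C) : ip_complete ip ->
  (forall n, \sum_(k < n) c k * (c k)^* <= D) -> exists l, forall j, ip (w j) l = c j.
Proof.
move=> complete S_le.
pose S n := \sum_(k < n) c k * (c k)^*; pose v n := \sum_(k < n) c k *: w k.
have S_mono n m : (n <= m)%N -> S n <= S m.
  by apply: (sum_ord_ge0_mono (F := fun k => c k * (c k)^*)) => k; exact: mul_conjC_ge0.
have S_ge0 n : 0 <= S n by rewrite sumr_ge0 // => k _; exact: mul_conjC_ge0.
have v_cauchy eps : 0 < eps -> exists N, forall m n, (N <= m)%N -> (N <= n)%N ->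
    normsq ip (v m - v n) < eps.
  move=> /(bounded_almost_max S_ge0 S_le) [N S_lt]; exists N.
  suff le_case m n : (N <= n <= m)%N -> normsq ip (v m - v n) < eps.
    move=> m n le_Nm le_Nn; have [le_nm|/ltnW le_mn] := leqP n m; first by rewrite le_case ?le_Nn.
    by rewrite -normsqN opprB le_case ?le_Nm.
  move=> /andP[le_Nn le_nm]; rewrite normsq_onb_sumB //.
  by apply: le_lt_trans (S_lt m); rewrite lerD2l lerN2 S_mono.
have [l v_to_l] := complete v v_cauchy.
exists l => j; apply/eqP; rewrite eq_sym -subr_eq0; apply/negP => /negP d_neq0.
set d := c j - ip (w j) l in d_neq0.
(* [v n - l] has coefficient [d] on [w j] for [n > j],
   so Bessel bounds [|d|^2] by [||v n - l||^2] *)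
have dd_gt0 : 0 < d * d^* by rewrite mul_conjC_gt0.
have [N v_near_l] := v_to_l _ dd_gt0.
set n := maxn N j.+1; have := v_near_l n (leq_maxl _ _).
have := @bessel1 (w j) (v n - l); rewrite ip_onb eqxx => /(_ erefl).
rewrite ipBr ip_onb_sum leq_max ltnSn orbT -/d => /le_lt_trans lt_dd /lt_dd.
by rewrite ltxx.
Qed.

End OrthonormalBasis.

Section Kraus.
Variables e f : nat -> V.
Variable Q : (V -> V) -> V -> V -> C.
Hypothesis he : orthonormal_basis ip e.
Hypothesis hf : orthonormal_basis ip f.
Hypothesis hQ : Q_linear_sesq ip e f Q.

Lemma span2_lincomb a rho sig : in_span2 ip e rho -> in_span2 ip e sig ->
  in_span2 ip e (fun v => a *: rho v + sig v).
Proof.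
case=> n1 [c1 [k1 [l1 ->]]] [n2 [c2 [k2 [l2 ->]]]].
pose glue T (x1 : 'I_n1 -> T) (x2 : 'I_n2 -> T) (i : 'I_(n1 + n2)) :=
  match split i with inl i1 => x1 i1 | inr i2 => x2 i2 end.
exists (n1 + n2)%N, (glue _ (fun i => a * c1 i) c2), (glue _ k1 k2), (glue _ l1 l2).
apply: funext => v; rewrite big_split_ord /= scaler_sumr; congr (_ + _); apply: eq_bigr => i _.
  by rewrite /glue (unsplitK (inl i)) scalerA.
by rewrite /glue (unsplitK (inr i)).
Qed.

Lemma span2_0 : in_span2 ip e (fun _ => 0).
Proof.
exists 0%N, (fun=> 0), (fun=> 0%N), (fun=> 0%N).
by apply: funext => v; rewrite big_ord0.
Qed.

Lemma span2_ketbra_onb k l : in_span2 ip e (ketbra ip (e k) (e l)).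
Proof.
exists 1%N, (fun=> 1), (fun=> k), (fun=> l).
by apply: funext => v; rewrite big_ord1 scale1r.
Qed.

Lemma span2_sum (F : nat -> V -> V) (c : nat -> C) n : (forall i, in_span2 ip e (F i)) ->
  in_span2 ip e (fun v => \sum_(i < n) c i *: F i v).
Proof.
move=> spanF; elim: n => [|n IH].
  have -> : (fun v => \sum_(i < 0) c i *: F i v) = fun _ => 0.
    by apply: funext => v; rewrite big_ord0.
  exact: span2_0.
have -> : (fun v => \sum_(i < n.+1) c i *: F i v) =
          (fun v => c n *: F n v + \sum_(i < n) c i *: F i v).
  by apply: funext => v; rewrite big_ord_recr /= addrC.
exact: span2_lincomb.
Qed.

Lemma Q_zero g h : in_span f g -> in_span f h -> Q (fun _ => 0) g h = 0.
Proof.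
move=> fg fh; have := hQ.1 1 _ _ span2_0 span2_0 g h fg fh.
rewrite (_ : (fun v => _) = fun _ => 0) => [|]; last by apply: funext => v; rewrite scaler0 addr0.
by rewrite mul1r -{1}[Q _ g h]addr0 => /addrI.
Qed.

Lemma Q_sum (F : nat -> V -> V) (c : nat -> C) n g h :
  (forall i, in_span2 ip e (F i)) -> in_span f g -> in_span f h ->
  Q (fun v => \sum_(i < n) c i *: F i v) g h = \sum_(i < n) c i * Q (F i) g h.
Proof.
move=> spanF fg fh; elim: n => [|n IH].
  have -> : (fun v => \sum_(i < 0) c i *: F i v) = fun _ => 0.
    by apply: funext => v; rewrite big_ord0.
  by rewrite Q_zero // big_ord0.
have -> : (fun v => \sum_(i < n.+1) c i *: F i v) =
          (fun v => c n *: F n v + (fun v => \sum_(i < n) c i *: F i v) v).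
  by apply: funext => v; rewrite big_ord_recr /= addrC.
by rewrite hQ.1 //; [rewrite IH big_ord_recr /= addrC | apply: span2_sum].
Qed.

Lemma ketbra_onb_suml N (a : nat -> C) y :
  ketbra ip (\sum_(k < N) a k *: e k) y = fun v => \sum_(k < N) a k *: ketbra ip (e k) y v.
Proof.
apply: funext => v; rewrite /ketbra scaler_sumr.
by apply: eq_bigr => k _; rewrite !scalerA mulrC.
Qed.

Lemma ketbra_onb_sumr N (b : nat -> C) x :
  ketbra ip x (\sum_(l < N) b l *: e l) = fun v => \sum_(l < N) (b l)^* *: ketbra ip x (e l) v.
Proof.
apply: funext => v; rewrite /ketbra ip_suml scaler_suml.
by apply: eq_bigr => l _; rewrite ipZl scalerA.
Qed.

Lemma span2_ketbra_onb_sumr k N (b : nat -> C) :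
  in_span2 ip e (ketbra ip (e k) (\sum_(l < N) b l *: e l)).
Proof.
rewrite ketbra_onb_sumr.
by apply: (@span2_sum (fun l => ketbra ip (e k) (e l)) (fun l => (b l)^*) N) => l;
  apply: span2_ketbra_onb.
Qed.

Lemma span2_ketbra_onb_sum N (a a' : nat -> C) :
  in_span2 ip e (ketbra ip (\sum_(k < N) a k *: e k) (\sum_(l < N) a' l *: e l)).
Proof.
rewrite ketbra_onb_suml; apply: (@span2_sum (fun k => ketbra ip (e k) _)) => k.
exact: span2_ketbra_onb_sumr.
Qed.

Lemma Q_ketbra_onb k l N (b b' : nat -> C) :
  Q (ketbra ip (e k) (e l)) (\sum_(m < N) b m *: f m) (\sum_(j < N) b' j *: f j) =
  \sum_(m < N) (b m)^* * \sum_(j < N) b' j * Q (ketbra ip (e k) (e l)) (f m) (f j).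
Proof.
have [Q_lin Q_antilin] := hQ.2 _ (span2_ketbra_onb k l).
rewrite (antilinear_onb_sum (w := f) (G := fun g => Q _ g _)) => [|a g g' fg fg'].
  apply: eq_bigr => m _; congr (_ * _).
  rewrite (linear_onb_sum (w := f) (G := fun h => Q _ (f m) h)) // => a h h' *.
  by apply: Q_lin => //; apply: span_onb.
by apply: Q_antilin => //; apply: span_onb_sum.
Qed.

(* the countable index set of the kernel is nat x nat, enumerated through [pickle] *)
Definition pair_index (k m : nat) : nat := pickle (k, m).
Definition index_pair (p : nat) : nat * nat := odflt (0%N, 0%N) (unpickle p).

Definition Q_kernel (p q : nat) : C :=
  Q (ketbra ip (e (index_pair p).1) (e (index_pair q).1)) (f (index_pair p).2) (f (index_pair q).2).

Lemma Q_kernel_pair k m l j :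
  Q_kernel (pair_index k m) (pair_index l j) = Q (ketbra ip (e k) (e l)) (f m) (f j).
Proof. by rewrite /Q_kernel /index_pair /pair_index !pickleK. Qed.

Lemma Q_expand (a a' b b' : nat -> C) N :
  Q (ketbra ip (\sum_(k < N) a k *: e k) (\sum_(l < N) a' l *: e l))
    (\sum_(m < N) b m *: f m) (\sum_(j < N) b' j *: f j) =
  \sum_(k < N) \sum_(m < N) \sum_(l < N) \sum_(j < N)
     (a k * (b m)^*) * (a' l * (b' j)^*)^* * Q_kernel (pair_index k m) (pair_index l j).
Proof.
set Y := \sum_(l < N) a' l *: e l.
have [fg fh] := (span_onb_sum f N b, span_onb_sum f N b').
rewrite ketbra_onb_suml (@Q_sum (fun k => ketbra ip (e k) Y)) => //; last first.
  by move=> k; apply: span2_ketbra_onb_sumr.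
apply: eq_bigr => k _.
rewrite /Y ketbra_onb_sumr (@Q_sum (fun l => ketbra ip (e k) (e l)) (fun l => (a' l)^*) N) //;
  last by move=> l; apply: span2_ketbra_onb.
rewrite big_distrr /= [RHS]exchange_big /=; apply: eq_bigr => l _.
rewrite Q_ketbra_onb !big_distrr /=; apply: eq_bigr => m _.
rewrite !big_distrr /=; apply: eq_bigr => j _.
by rewrite Q_kernel_pair rmorphM /= conjCK; ring.
Qed.

Lemma Q_ketbra_scale k l m j c c' :
  Q (ketbra ip (c *: e k) (c' *: e l)) (f m) (f j) =
  c * c'^* * Q (ketbra ip (e k) (e l)) (f m) (f j).
Proof.
have -> : ketbra ip (c *: e k) (c' *: e l) =
    (fun v => (c * c'^*) *: ketbra ip (e k) (e l) v + (fun _ => 0) v).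
  by apply: funext => v; rewrite /ketbra ipZl addr0 !scalerA mulrC mulrA.
rewrite hQ.1 ?Q_zero ?addr0 //.
all: first [exact: span2_ketbra_onb | exact: span2_0 | exact: span_onb].
Qed.

Hypothesis hcp : completely_positive ip e f Q.

Lemma Q_kernel_psd : psd_kernel Q_kernel.
Proof.
move=> n c x.
have := @hcp n (fun i => c i *: e (index_pair (x i)).1) (fun i => f (index_pair (x i)).2).
rewrite /Q_kernel; under eq_bigr do under eq_bigr do rewrite Q_ketbra_scale.
by apply=> i; [exact: span_onbZ | exact: span_onb].
Qed.

(* [kraus a phi g] is <g|K_a|phi>, where <f_m|K_a|e_k> is the Cholesky vector
   [chol_vec Q_kernel a] at the index of (k, m) *)
Definition kraus_summand (a : nat) (phi g : V) (k m : nat) : C :=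
  ip (e k) phi * (ip (f m) g)^* * chol_vec Q_kernel a (pair_index k m).

Definition kraus (a : nat) (phi g : V) : C :=
  \sum_(k < support_bound e phi) \sum_(m < support_bound f g) kraus_summand a phi g k m.

Lemma kraus_supported a phi g N1 N2 : coef_vanish e N1 phi -> coef_vanish f N2 g ->
  kraus a phi g = \sum_(k < N1) \sum_(m < N2) kraus_summand a phi g k m.
Proof.
move=> e_phi f_g; have e_phi' := coef_vanish_support_bound e_phi.
have f_g' := coef_vanish_support_bound f_g.
set t := kraus_summand a phi g.
have t_row0 k : ip (e k) phi = 0 -> forall m, t k m = 0.
  by move=> e0 m; rewrite /t /kraus_summand e0 !mul0r.
have t_col0 m : ip (f m) g = 0 -> forall k, t k m = 0.
  by move=> f0 k; rewrite /t /kraus_summand f0 conjC0 mulr0 mul0r.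
rewrite /kraus (@sum_ord_tail0_eq _ (fun k => \sum_(m < support_bound f g) t k m) _ N1).
- apply: eq_bigr => k _.
  by apply: sum_ord_tail0_eq => m; [move=> /f_g' /t_col0 -> | move=> /f_g /t_col0 ->].
- by move=> k /e_phi' /t_row0 t0; rewrite big1.
- by move=> k /e_phi /t_row0 t0; rewrite big1.
Qed.

Definition kraus_count N := (\max_(k < N) \max_(m < N) (pair_index k m).+1)%N.

Lemma pair_index_lt_count k m N : (k < N)%N -> (m < N)%N -> (pair_index k m < kraus_count N)%N.
Proof.
move=> ltkN ltmN.
apply: leq_trans
  (leq_bigmax (F := fun k : 'I_N => \max_(m < N) (pair_index k m).+1) (Ordinal ltkN)).
exact: (leq_bigmax (F := fun m : 'I_N => (pair_index k m).+1) (Ordinal ltmN)).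
Qed.

Lemma kraus_eq0 a phi g N : coef_vanish e N phi -> coef_vanish f N g ->
  (kraus_count N <= a)%N -> kraus a phi g = 0.
Proof.
move=> e_phi f_g le_count_a; rewrite (kraus_supported _ e_phi f_g).
rewrite big1 // => k _; rewrite big1 // => m _.
by rewrite /kraus_summand (chol_vec_eq0 Q_kernel_psd) ?mulr0 //;
  apply: leq_trans le_count_a; apply: pair_index_lt_count.
Qed.

Lemma sum_kraus phi phi' g h N n :
  coef_vanish e N phi -> coef_vanish e N phi' -> coef_vanish f N g -> coef_vanish f N h ->
  (kraus_count N <= n)%N ->
  \sum_(a < n) kraus a phi g * (kraus a phi' h)^* = Q (ketbra ip phi phi') g h.
Proof.
move=> e_phi e_phi' f_g f_h le_count_n.
have := Q_expand (fun k => ip (e k) phi) (fun l => ip (e l) phi')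
                 (fun m => ip (f m) g) (fun j => ip (f j) h) N.
rewrite -(onb_expand he e_phi) -(onb_expand he e_phi') -(onb_expand hf f_g) -(onb_expand hf f_h).
move=> ->.
under eq_bigr => a _ do
  rewrite (kraus_supported _ e_phi f_g) (kraus_supported _ e_phi' f_h) mul_double_sum_conj.
rewrite exchange_big; apply: eq_bigr => k _; rewrite exchange_big; apply: eq_bigr => m _.
rewrite exchange_big; apply: eq_bigr => l _; rewrite exchange_big; apply: eq_bigr => j _.
have lt_km_n := leq_trans (pair_index_lt_count (ltn_ord k) (ltn_ord m)) le_count_n.
rewrite (cholesky_decomp Q_kernel_psd _ lt_km_n) big_distrr; apply: eq_bigr => a _.
by rewrite /kraus_summand !rmorphM /=; ring.
Qed.

Lemma kraus_generalized a : generalized_operator e f (kraus a).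
Proof.
split=> [s phi phi' h e_phi e_phi' f_h | s phi h h' e_phi f_h f_h'].
- set N := (support_bound e phi + support_bound e phi')%N.
  have e1 : coef_vanish e N phi.
    by apply: coef_vanish_mono (span_support_bound he e_phi); apply: leq_addr.
  have e2 : coef_vanish e N phi'.
    by apply: coef_vanish_mono (span_support_bound he e_phi'); apply: leq_addl.
  have f1 := span_support_bound hf f_h.
  rewrite (kraus_supported _ (coef_vanish_lincomb s e1 e2) f1).
  rewrite (kraus_supported _ e1 f1) (kraus_supported _ e2 f1) big_distrr -big_split.
  apply: eq_bigr => k _; rewrite big_distrr -big_split; apply: eq_bigr => m _ /=.
  by rewrite /kraus_summand ipDZr; ring.
- set N := (support_bound f h + support_bound f h')%N.
  have f1 : coef_vanish f N h.
    by apply: coef_vanish_mono (span_support_bound hf f_h); apply: leq_addr.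
  have f2 : coef_vanish f N h'.
    by apply: coef_vanish_mono (span_support_bound hf f_h'); apply: leq_addl.
  have e1 := span_support_bound he e_phi.
  rewrite (kraus_supported _ e1 (coef_vanish_lincomb s f1 f2)).
  rewrite (kraus_supported _ e1 f1) (kraus_supported _ e1 f2) big_distrr -big_split.
  apply: eq_bigr => k _; rewrite big_distrr -big_split; apply: eq_bigr => m _ /=.
  by rewrite /kraus_summand ipDZr rmorphD rmorphM /=; ring.
Qed.

Lemma kraus_sums_to phi phi' g h :
  in_span e phi -> in_span e phi' -> in_span f g -> in_span f h ->
  sums_to (fun a => kraus a phi g * (kraus a phi' h)^*) (Q (ketbra ip phi phi') g h).
Proof.
move=> e_phi e_phi' f_g f_h.
set N := (support_bound e phi + support_bound e phi' + support_bound f g + support_bound f h)%N.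
have e1 : coef_vanish e N phi by apply: coef_vanish_mono (span_support_bound he e_phi); lia.
have e2 : coef_vanish e N phi' by apply: coef_vanish_mono (span_support_bound he e_phi'); lia.
have f1 : coef_vanish f N g by apply: coef_vanish_mono (span_support_bound hf f_g); lia.
have f2 : coef_vanish f N h by apply: coef_vanish_mono (span_support_bound hf f_h); lia.
set u := fun a => _; have u0 a : (kraus_count N <= a)%N -> u a = 0.
  by move=> le_count_a; rewrite /u (kraus_eq0 e1 f1 le_count_a) mul0r.
split.
  exists (\sum_(i < kraus_count N) `|u i|) => n.
  rewrite -(@sum_ord_tail0 _ (fun i => `|u i|) _ _ (leq_maxr n (kraus_count N))) => [|k /u0 ->].
    by apply: (sum_ord_ge0_mono (F := fun i => `|u i|)) => //; apply: leq_maxl.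
  by rewrite normr0.
move=> eps eps_gt0; exists (kraus_count N) => n le_count_n.
by rewrite /u (sum_kraus e1 e2 f1 f2 le_count_n) subrr normr0.
Qed.

Lemma kraus_term_le a phi v : in_span e phi -> in_span f v ->
  kraus a phi v * (kraus a phi v)^* <= Q (ketbra ip phi phi) v v.
Proof.
move=> e_phi f_v; pose N := maxn (support_bound e phi) (support_bound f v).
have e1 : coef_vanish e N phi.
  by apply: coef_vanish_mono (span_support_bound he e_phi); apply: leq_maxl.
have f1 : coef_vanish f N v.
  by apply: coef_vanish_mono (span_support_bound hf f_v); apply: leq_maxr.
have lt_a_B : (a < maxn (kraus_count N) a.+1)%N by rewrite leq_maxr.
rewrite -(sum_kraus e1 e1 f1 f1 (leq_maxl _ a.+1)) (bigD1 (Ordinal lt_a_B)) //= lerDl.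
by rewrite sumr_ge0 // => i _; apply: mul_conjC_ge0.
Qed.

Lemma kraus_onb_sum a phi n (c : nat -> C) : in_span e phi ->
  kraus a phi (\sum_(m < n) c m *: f m) = \sum_(m < n) (c m)^* * kraus a phi (f m).
Proof.
move=> e_phi; apply: (antilinear_onb_sum (G := kraus a phi)) => s g g' f_g f_g'.
exact: (kraus_generalized a).2.
Qed.

Lemma kraus_coef_bounded a phi T M : in_span e phi ->
  (forall x, normsq ip (T x) <= M * normsq ip x) ->
  (forall g h, in_span f g -> in_span f h -> Q (ketbra ip phi phi) g h = ip g (T h)) ->
  forall n, \sum_(m < n) kraus a phi (f m) * (kraus a phi (f m))^* <= (1 + M) / 2%:R.
Proof.
move=> e_phi T_bounded T_Q n.
pose c m := kraus a phi (f m); pose v := \sum_(m < n) c m *: f m.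
set S := \sum_(m < n) _.
have S_ge0 : 0 <= S by rewrite sumr_ge0 // => m _; apply: mul_conjC_ge0.
have M_ge0 : 0 <= M.
  have := T_bounded (e 0%N); rewrite /normsq ip_onb // eqxx mulr1.
  exact: le_trans (ip_ge0 _).
have normsq_v : normsq ip v = S by rewrite normsq_onb_sum.
have SS_le : S * S <= ip v (T v).
  have f_v : in_span f v by apply: span_onb_sum.
  have Kv : kraus a phi v = S by rewrite kraus_onb_sum //; apply: eq_bigr => m _; rewrite mulrC.
  by have := kraus_term_le a e_phi f_v; rewrite Kv (geC0_conj S_ge0) T_Q.
have key : 2%:R * (S * S) <= S + M * S.
  apply: le_trans (ler_wpM2l (ler0n _ 2) SS_le) _.
  apply: le_trans (ip_le_normsq (le_trans (mulr_ge0 S_ge0 S_ge0) SS_le)) _.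
  rewrite -/(normsq ip v) -/(normsq ip (T v)) normsq_v lerD2l -normsq_v.
  exact: T_bounded.
have [->|S_neq0] := eqVneq S 0; first by rewrite divr_ge0 ?addr_ge0 ?ler01 ?ler0n.
have S_gt0 : 0 < S by rewrite lt_def S_neq0.
rewrite ler_pdivlMr ?ltr0n // -(ler_pM2r S_gt0).
have -> : S * 2%:R * S = 2%:R * (S * S) by ring.
by rewrite [(1 + M) * S]mulrDl mul1r.
Qed.

Lemma kraus_maps_into_H a : ip_complete ip ->
  (forall rho : V -> V, in_span2 ip e rho ->
     exists T : V -> V, bounded_operator ip T /\
       forall g h : V, in_span f g -> in_span f h -> Q rho g h = ip g (T h)) ->
  maps_into_H ip e f (kraus a).
Proof.
move=> complete Q_bounded phi e_phi.
have e2_phi : in_span2 ip e (ketbra ip phi phi).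
  rewrite (onb_expand he (span_support_bound he e_phi)).
  exact: (span2_ketbra_onb_sum _ (fun k => ip (e k) phi) (fun k => ip (e k) phi)).
have [T [[_ [M T_bounded]] T_Q]] := Q_bounded _ e2_phi.
have [l l_coef] := riesz_fischer (c := fun m => kraus a phi (f m)) hf complete
  (kraus_coef_bounded a e_phi T_bounded T_Q).
exists l => h f_h; rewrite (onb_expand hf (span_support_bound hf f_h)).
rewrite (kraus_onb_sum a _ (fun m => ip (f m) h) e_phi) ip_suml.
by apply: eq_bigr => m _; rewrite ipZl l_coef.
Qed.

End Kraus.
End InnerProduct.

Unset Implicit Arguments.

Theorem theorem6p2 (R : realType) (V : lmodType R[i]) (ip : V -> V -> R[i])
    (e f : nat -> V) (Q : (V -> V) -> V -> V -> R[i]) :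
  hilbert_space ip ->
  orthonormal_basis ip e -> orthonormal_basis ip f ->
  Q_linear_sesq ip e f Q ->
  completely_positive ip e f Q ->
  exists K : nat -> V -> V -> R[i],
    (forall alpha : nat, generalized_operator e f (K alpha)) /\
    (forall phi phi' g h : V,
       in_span e phi -> in_span e phi' -> in_span f g -> in_span f h ->
       sums_to (fun alpha => K alpha phi g * (K alpha phi' h)^*)
               (Q (ketbra ip phi phi') g h)) /\
    ((forall rho : V -> V, in_span2 ip e rho ->
        exists T : V -> V, bounded_operator ip T /\
          forall g h : V, in_span f g -> in_span f h -> Q rho g h = ip g (T h)) ->
     forall alpha : nat, maps_into_H ip e f (K alpha)).
Proof.
move=> [hip complete] he hf hQ hcp.
exists (kraus ip e f Q); split; [|split].
- by move=> a; apply: kraus_generalized.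
- by move=> phi phi' g h; apply: kraus_sums_to.
- by move=> Q_bounded a; apply: kraus_maps_into_H.
Qed.
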